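(* Let $(A,\leq,\cdot,/)$ be a right-residuated magma satisfying condition (N), and let $B\subseteq A$ be closed under $\sqcap$. The following are equivalent: (1) $(B,\sqcap)$ is a left normal band, i.e. an idempotent semigroup satisfying $x\sqcap y\sqcap z = x\sqcap z\sqcap y$; (2) $(B,\sqcap)$ is a semigroup (i.e. $\sqcap$ is associative on $B$); (3) $(B,\sqcap)$ satisfies, for all $x,y,z\in B$, the identities $x\sqcap(y\sqcap x)=x\sqcap y$ and $(x\sqcap(y\sqcap z))\sqcap z = x\sqcap (y\sqcap z)$.
   Context: Write $xy$ for $x\cdot y$; $\cdot$ binds more strongly than $/$, and $/$ binds more strongly than $\sqcap$, where $x\sqcap y := (x/y)y$. A right-residuated magma is a structure $(A,\leq,\cdot,/)$ where $(A,\leq)$ is a poset and $xy\leq z\iff x\leq z/y$ for all $x,y,z\in A$. Condition (N): for all $x,y\in A$, $x\leq y\iff x = y\sqcap x$. *)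

Definition right_residuated_magma {A : Type} (le : A -> A -> Prop)
  (mul rdiv : A -> A -> A) : Prop :=
  (forall x, le x x) /\
  (forall x y z, le x y -> le y z -> le x z) /\
  (forall x y, le x y -> le y x -> x = y) /\
  (forall x y z, le (mul x y) z <-> le x (rdiv z y)).

Definition sqcap {A : Type} (mul rdiv : A -> A -> A) (x y : A) : A :=
  mul (rdiv x y) y.

Definition condN {A : Type} (le : A -> A -> Prop) (mul rdiv : A -> A -> A) : Prop :=
  forall x y, le x y <-> x = sqcap mul rdiv y x.

Definition semigroup_on {A : Type} (B : A -> Prop) (m : A -> A -> A) : Prop :=
  forall x y z, B x -> B y -> B z -> m (m x y) z = m x (m y z).

Definition left_normal_band_on {A : Type} (B : A -> Prop) (m : A -> A -> A) : Prop :=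
  semigroup_on B m /\
  (forall x, B x -> m x x = x) /\
  (forall x y z, B x -> B y -> B z -> m (m x y) z = m (m x z) y).

Definition cond3 {A : Type} (B : A -> Prop) (m : A -> A -> A) : Prop :=
  (forall x y, B x -> B y -> m x (m y x) = m x y) /\
  (forall x y z, B x -> B y -> B z -> m (m x (m y z)) z = m x (m y z)).


(* The key observation is that [x ⊓ y] is the greatest element below [x]
   that is fixed by [_ ⊓ y]; with condition (N) the operation is moreover
   idempotent.  Under (3), "u is fixed by [_ ⊓ (y ⊓ z)]" turns out to mean
   "u is fixed by both [_ ⊓ y] and [_ ⊓ z]", and both associativity and left
   normality then follow by comparing the two sides with this characterisation
   and antisymmetry. *)

Section ResiduatedMagma.

Variables (A : Type) (le : A -> A -> Prop) (mul rdiv : A -> A -> A).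
Hypothesis HA : right_residuated_magma le mul rdiv.

Local Notation m := (sqcap mul rdiv).

Lemma rrm_refl x : le x x.
Proof. apply HA. Qed.

Lemma rrm_trans x y z : le x y -> le y z -> le x z.
Proof. apply HA. Qed.

Lemma rrm_antisym x y : le x y -> le y x -> x = y.
Proof. apply HA. Qed.

Lemma rrm_residual x y z : le (mul x y) z <-> le x (rdiv z y).
Proof. apply HA. Qed.

Lemma sqcap_le_l x y : le (m x y) x.
Proof. apply rrm_residual, rrm_refl. Qed.

Lemma sqcap_le_ll x y z : le (m (m x y) z) x.
Proof. eapply rrm_trans; apply sqcap_le_l. Qed.

Lemma mul_monotone_l u v y : le u v -> le (mul u y) (mul v y).
Proof.
  intros Huv. apply rrm_residual.
  apply (rrm_trans _ v); [exact Huv |]. apply rrm_residual, rrm_refl.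
Qed.

Lemma sqcap_monotone_l a x y : le (m a y) x -> le (m a y) (m x y).
Proof.
  intros Hax. apply mul_monotone_l, rrm_residual, Hax.
Qed.

Lemma sqcap_greatest u x y : m u y = u -> le u x -> le u (m x y).
Proof. intros Hu Hux. rewrite <- Hu. apply sqcap_monotone_l. now rewrite Hu. Qed.

Lemma sqcap_idem_r x y : m (m x y) y = m x y.
Proof.
  apply rrm_antisym; [apply sqcap_le_l |].
  apply sqcap_monotone_l, rrm_refl.
Qed.

Hypothesis HN : condN le mul rdiv.

Lemma sqcap_idem x : m x x = x.
Proof. symmetry. apply HN, rrm_refl. Qed.

Variable B : A -> Prop.
Hypothesis HB : forall x y, B x -> B y -> B (m x y).

Lemma semigroup_cond3 : semigroup_on B m -> cond3 B m.
Proof.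
  intros Hassoc. split.
  - intros x y Bx By.
    assert (Hxy : m x (m x y) = m x y).
    { rewrite <- Hassoc by auto. now rewrite sqcap_idem. }
    rewrite <- Hassoc by auto.
    apply rrm_antisym; [apply sqcap_le_l |].
    apply HN. rewrite Hassoc, Hxy by auto. symmetry. apply sqcap_idem.
  - intros x y z Bx By Bz. rewrite Hassoc by auto. now rewrite sqcap_idem_r.
Qed.

Lemma semigroup_left_normal_band : semigroup_on B m -> left_normal_band_on B m.
Proof.
  intros Hassoc. destruct (semigroup_cond3 Hassoc) as [Hxyx _].
  assert (Hfix : forall x y z, B x -> B y -> B z ->
            m (m (m x y) z) y = m (m x y) z).
  { intros x y z Bx By Bz.
    rewrite !Hassoc by auto. rewrite Hxyx by auto. now rewrite <- Hassoc. }
  assert (Hle : forall x y z, B x -> B y -> B z ->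
            le (m (m x y) z) (m (m x z) y)).
  { intros x y z Bx By Bz. apply sqcap_greatest; [now apply Hfix |].
    apply sqcap_greatest; [apply sqcap_idem_r | apply sqcap_le_ll]. }
  split; [exact Hassoc | split].
  - intros x _. apply sqcap_idem.
  - intros x y z Bx By Bz. apply rrm_antisym; now apply Hle.
Qed.

Section Cond3.

Hypothesis H3 : cond3 B m.

Lemma fixed_sqcap_r u b c : B u -> B b -> B c -> m u (m b c) = u -> m u c = u.
Proof.
  intros Bu Bb Bc Hu. rewrite <- Hu. apply (proj2 H3); auto.
Qed.

Lemma fixed_sqcap_l u y z : B u -> B y -> B z -> m u (m y z) = u -> m u y = u.
Proof.
  intros Bu By Bz Hu.
  rewrite <- (proj1 H3 y z By Bz) in Hu.
  apply (fixed_sqcap_r u z y); auto.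
  apply (fixed_sqcap_r u y (m z y)); auto.
Qed.

Lemma fixed_trans t b u : B t -> B b -> B u ->
  m t b = t -> m u t = u -> m u b = u.
Proof.
  intros Bt Bb Bu Ht Hu. rewrite <- Ht in Hu.
  apply (fixed_sqcap_r u t b); auto.
Qed.

Lemma fixed_sqcap t y z : B t -> B y -> B z ->
  m t y = t -> m t z = t -> m t (m y z) = t.
Proof.
  intros Bt By Bz Hy Hz.
  (* [(y ⊓ z) ⊓ t] and [y ⊓ t] are both the greatest [t]-fixed element below [y]. *)
  assert (E : m (m y z) t = m y t).
  { apply rrm_antisym.
    - apply sqcap_greatest; [apply sqcap_idem_r | apply sqcap_le_ll].
    - apply sqcap_greatest; [apply sqcap_idem_r |].
      apply sqcap_greatest; [| apply sqcap_le_l].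
      apply (fixed_trans t z); auto. apply sqcap_idem_r. }
  rewrite <- (proj1 H3 t (m y z)) by auto. rewrite E.
  rewrite (proj1 H3) by auto. exact Hy.
Qed.

Lemma cond3_semigroup : semigroup_on B m.
Proof.
  intros x y z Bx By Bz.
  apply rrm_antisym.
  - apply sqcap_greatest; [| apply sqcap_le_ll].
    apply fixed_sqcap; auto; [| apply sqcap_idem_r].
    apply (fixed_trans (m x y) y); auto; [apply sqcap_idem_r |].
    apply (fixed_sqcap_r _ z (m x y)); auto.
    rewrite <- (proj1 H3 (m x y) z) by auto. apply sqcap_idem_r.
  - apply sqcap_greatest.
    + apply (fixed_sqcap_r _ y z); auto. apply sqcap_idem_r.
    + apply sqcap_greatest; [| apply sqcap_le_l].
      apply (fixed_sqcap_l _ y z); auto. apply sqcap_idem_r.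
Qed.

End Cond3.

End ResiduatedMagma.

Theorem mainTheorem3 (A : Type) (le : A -> A -> Prop) (mul rdiv : A -> A -> A)
  (HA : right_residuated_magma le mul rdiv) (HN : condN le mul rdiv)
  (B : A -> Prop)
  (HB : forall x y, B x -> B y -> B (sqcap mul rdiv x y)) :
  (left_normal_band_on B (sqcap mul rdiv) <-> semigroup_on B (sqcap mul rdiv)) /\
  (semigroup_on B (sqcap mul rdiv) <-> cond3 B (sqcap mul rdiv)).
Proof.
  split; split.
  - intros [Hassoc _]. exact Hassoc.
  - eapply semigroup_left_normal_band; eassumption.
  - eapply semigroup_cond3; eassumption.
  - eapply cond3_semigroup; eassumption.
Qed.
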